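(* Let $\mathbb{F}$ be any finite field. For inputs $\alpha,\beta\in\mathbb{F}$, choose $a_1,a_2,a_3,b_1,b_2,b_3\in\mathbb{F}$ uniformly at random subject to $a_1+a_2+a_3=\alpha$ and $b_1+b_2+b_3=\beta$, and define $$y_1=(a_2+a_3)(b_2+b_3),\qquad y_2=a_1b_1+a_1b_3+a_3b_1,\qquad y_3=a_1b_2+a_2b_1.$$ (These are the output shares of the $1$-private $3$-server greedy-monomial CNF HSS for multiplication, where server $j$ holds $(a_i,b_i)_{i\ne j}$ and $y_1+y_2+y_3=\alpha\beta$.) Then the joint distribution of $(y_1,y_2,y_3)$ depends only on $\alpha\beta$; that is, for all $\alpha,\beta,\alpha',\beta'\in\mathbb{F}$ with $\alpha\beta=\alpha'\beta'$, the distributions for $(\alpha,\beta)$ and $(\alpha',\beta')$ are identical. In particular this HSS is symmetrically private.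
   Context: An HSS is symmetrically private (SHSS) if for every function $f$ in its class and every input $\mathbf{x}$, the joint distribution of the output shares depends only on $f(\mathbf{x})$. *)

From mathcomp Require Import all_boot all_order all_algebra all_field.
Set Implicit Arguments. Unset Strict Implicit. Unset Printing Implicit Defensive.
Import GRing.Theory.
Local Open Scope ring_scope.

Definition rnd (F : finFieldType) : finType :=
  ((F * F * F) * (F * F * F))%type.

Definition valid_sharing (F : finFieldType) (alpha beta : F) (r : rnd F) : bool :=
  let: ((a1, a2, a3), (b1, b2, b3)) := r in
  (a1 + a2 + a3 == alpha) && (b1 + b2 + b3 == beta).

Definition out_shares (F : finFieldType) (r : rnd F) : F * F * F :=
  let: ((a1, a2, a3), (b1, b2, b3)) := r in
  ((a2 + a3) * (b2 + b3), a1 * b1 + a1 * b3 + a3 * b1, a1 * b2 + a2 * b1).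

Definition out_dist (F : finFieldType) (alpha beta : F) (y : F * F * F) : rat :=
  (#|[set r : rnd F | valid_sharing alpha beta r && (out_shares r == y)]|%:R)
  / (#|[set r : rnd F | valid_sharing alpha beta r]|%:R).

From mathcomp Require Import all_boot all_order all_algebra all_field.
From mathcomp Require Import ring.
Set Implicit Arguments. Unset Strict Implicit. Unset Printing Implicit Defensive.
Import GRing.Theory.
Local Open Scope ring_scope.

(* Solving for a3 and b3, the shares are y1 = x := (alpha - a1)(beta - b1),
   y3 = t := a1 b2 + a2 b1 and y2 = alpha beta - x - t.  For (a1, b1) <> 0 the
   map (a2, b2) |-> t is a nonzero linear form, so it hits every t exactly |F|
   times; substituting (u, v) = (alpha - a1, beta - b1), the pairs (a1, b1) <> 0
   are the (u, v) <> (alpha, beta).  Hence the number of randomness strings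
   producing given outputs is a formula in alpha beta alone, up to a correction
   at (u, v) = (alpha, beta) that again only involves alpha beta. *)

Lemma card_set_sum (T : finType) (P : pred T) : #|[set r | P r]| = (\sum_r P r)%N.
Proof. by rewrite -sum1_card big_mkcond; apply: eq_bigr => r _; rewrite inE. Qed.

Lemma sum_pair (T1 T2 : finType) (K : T1 * T2 -> nat) :
  (\sum_p K p = \sum_x \sum_y K (x, y))%N.
Proof. by rewrite pair_big; apply: eq_bigr => -[]. Qed.

Lemma sum_triple (T : finType) (K : T * T * T -> nat) :
  (\sum_p K p = \sum_x1 \sum_x2 \sum_x3 K (x1, x2, x3))%N.
Proof. by rewrite sum_pair sum_pair. Qed.

Section CnfShares.
Variable F : finFieldType.

Definition shares_of_product (g x t : F) : F * F * F := (x, g - x - t, t).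

Lemma sum_linear_solve (a b s : F) (K : F -> nat) :
  (\sum_c (if (a + b + c == s)%R then K c else 0) = K (s - a - b)%R)%N.
Proof.
rewrite -big_mkcond (eq_bigl (fun c => c == s - a - b)) ?big_pred1_eq //.
by move=> c /=; apply/eqP/eqP => [<-|->]; ring.
Qed.

Lemma card_valid_sharing_out (alpha beta : F) (P : pred (F * F * F)) :
  #|[set r | valid_sharing alpha beta r && P (out_shares r)]| =
  (\sum_a1 \sum_a2 \sum_b1 \sum_b2
     P (shares_of_product (alpha * beta) ((alpha - a1) * (beta - b1))
                          (a1 * b2 + a2 * b1))%R)%N.
Proof.
rewrite card_set_sum sum_pair sum_triple.
apply: eq_bigr => a1 _; apply: eq_bigr => a2 _.
under eq_bigr => a3 _.
  rewrite (_ : (\sum_y _)%N = if a1 + a2 + a3 == alpha then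
     (\sum_y (valid_sharing alpha beta (a1, a2, a3, y)
                && P (out_shares (a1, a2, a3, y)) : nat))%N else 0%N); last first.
    by case: ifP => Ha //; apply: big1 => -[[b1 b2] b3] _; rewrite /= Ha.
  over.
rewrite sum_linear_solve sum_triple; apply: eq_bigr => b1 _; apply: eq_bigr => b2 _.
rewrite /valid_sharing.
have -> : a1 + a2 + (alpha - a1 - a2) == alpha by apply/eqP; ring.
rewrite (eq_bigr (fun b3 => if (b1 + b2 + b3 == beta)%R then
   P (out_shares (a1, a2, alpha - a1 - a2, (b1, b2, b3)))%R : nat else 0%N)) => [|b3 _].
  rewrite sum_linear_solve /shares_of_product.
  by congr (nat_of_bool (P (_, _, _))); ring.
by case: ifP.
Qed.

Lemma sum_linear_form (p : F * F) (K : F -> nat) : p != 0 ->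
  (\sum_a \sum_b K (p.1 * b + a * p.2)%R = #|F| * \sum_t K t)%N.
Proof.
case: p => c d; rewrite -sum_nat_const; have [-> | c0 _] := eqVneq c 0.
  rewrite xpair_eqE eqxx /= => d0; rewrite exchange_big; apply: eq_bigr => b _.
  have inj : injective (fun a => 0 * b + a * d) by move=> x z /addrI /mulIf; apply.
  by rewrite [RHS](reindex_inj inj).
apply: eq_bigr => a _.
have inj : injective (fun b => c * b + a * d) by move=> x z /addIr /mulfI; apply.
by rewrite [RHS](reindex_inj inj).
Qed.

Lemma sum_cnf_shares (alpha beta : F) (K : F -> F -> nat) :
  (\sum_a1 \sum_b1 \sum_a2 \sum_b2
       K ((alpha - a1) * (beta - b1))%R (a1 * b2 + a2 * b1)%R
     + #|F| * \sum_t K (alpha * beta)%R t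
   = #|F| * \sum_(p : F * F) \sum_t K (p.1 * p.2)%R t
     + #|F| ^ 2 * K (alpha * beta)%R 0%R)%N.
Proof.
rewrite pair_big /= (bigD1 (0 : F * F)) //= !subr0.
have -> : (\sum_a2 \sum_b2 K (alpha * beta)%R (0 * b2 + a2 * 0)%R
            = #|F| ^ 2 * K (alpha * beta)%R 0%R)%N.
  under eq_bigr => a2 _ do under eq_bigr => b2 _ do rewrite mul0r mulr0 addr0.
  by rewrite !sum_nat_const mulnA.
rewrite -addnA addnC; congr addn.
under eq_bigr => p /= p0 do rewrite (sum_linear_form _ p0).
have inj : injective (fun p : F * F => (alpha - p.1, beta - p.2)).
  by move=> [x1 x2] [z1 z2] /= [/subrI -> /subrI ->].
rewrite [in RHS](reindex_inj inj) [in RHS](bigD1 (0 : F * F)) //= !subr0.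
rewrite mulnDr [in LHS]addnC; congr addn; by rewrite big_distrr.
Qed.

Lemma sum_cnf_shares_mul_eq (alpha beta alpha' beta' : F) (K : F -> F -> nat) :
  alpha * beta = alpha' * beta' ->
  (\sum_a1 \sum_b1 \sum_a2 \sum_b2
     K ((alpha - a1) * (beta - b1))%R (a1 * b2 + a2 * b1)%R
   = \sum_a1 \sum_b1 \sum_a2 \sum_b2
     K ((alpha' - a1) * (beta' - b1))%R (a1 * b2 + a2 * b1)%R)%N.
Proof.
move=> eq_ab; apply: (@addIn (#|F| * \sum_t K (alpha * beta)%R t)%N).
by rewrite sum_cnf_shares [in RHS]eq_ab sum_cnf_shares eq_ab.
Qed.

Lemma card_valid_sharing_out_mul_eq (alpha beta alpha' beta' : F) (P : pred (F * F * F)) :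
  alpha * beta = alpha' * beta' ->
  #|[set r | valid_sharing alpha beta r && P (out_shares r)]| =
  #|[set r | valid_sharing alpha' beta' r && P (out_shares r)]|.
Proof.
move=> eq_ab; rewrite !card_valid_sharing_out.
under eq_bigr do rewrite exchange_big; under [RHS]eq_bigr do rewrite exchange_big.
by rewrite /= eq_ab; apply: (sum_cnf_shares_mul_eq
  (fun x t => P (shares_of_product (alpha' * beta') x t))).
Qed.

End CnfShares.

Theorem mainTheorem18 (F : finFieldType) (alpha beta alpha' beta' : F) :
  alpha * beta = alpha' * beta' ->
  forall y : F * F * F, out_dist alpha beta y = out_dist alpha' beta' y.
Proof.
move=> eq_ab y; rewrite /out_dist.
have card_valid a b : #|[set r : rnd F | valid_sharing a b r]| =
    #|[set r | valid_sharing a b r && predT (out_shares r)]|.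
  by apply: eq_card => r; rewrite !inE andbT.
rewrite !card_valid (card_valid_sharing_out_mul_eq predT eq_ab).
by rewrite (card_valid_sharing_out_mul_eq (pred1 y) eq_ab).
Qed.
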